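(* Every countably infinite ${\le}5$-set-homogeneous 4-hypergraph has an automorphism group which is 2-transitive on its vertex set.
   Context: A 4-hypergraph is a pair $(M,E)$ with $M$ countable and $E$ a set of 4-element subsets of $M$ (edges). It is ${\le}5$-set-homogeneous if for each $s\le 5$, whenever $U,V\subseteq M$ with $|U|=|V|=s$ carry isomorphic induced subhypergraphs there is $g\in\mathrm{Aut}(M,E)$ with $U^g=V$. A permutation group is 2-transitive if transitive on ordered pairs of distinct points. *)

From mathcomp Require Import all_boot.
From mathcomp Require Import classical_sets functions.
Set Implicit Arguments. Unset Strict Implicit. Unset Printing Implicit Defensive.
Local Open Scope classical_set_scope.

Definition nset (M : Type) (n : nat) (S : set M) : Prop :=
  exists f : 'I_n -> M, injective f /\ S = range f.

Definition countably_infinite (M : Type) : Prop :=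
  exists f : nat -> M, bijective f.

Definition hypergraph4 (M : Type) (E : set (set M)) : Prop :=
  forall S, E S -> nset 4 S.

Definition is_aut (M : Type) (E : set (set M)) (g : M -> M) : Prop :=
  bijective g /\ forall S : set M, E S <-> E (g @` S).

Definition induced_iso (M : Type) (E : set (set M)) (U V : set M) : Prop :=
  exists h : M -> M,
    (forall x y, U x -> U y -> h x = h y -> x = y) /\
    h @` U = V /\
    (forall S : set M, S `<=` U -> (E S <-> E (h @` S))).

Definition le_set_homogeneous (M : Type) (E : set (set M)) (k : nat) : Prop :=
  forall s : nat, s <= k -> forall U V : set M,
    nset s U -> nset s V -> induced_iso E U V ->
    exists g : M -> M, is_aut E g /\ g @` U = V.

Definition aut_two_transitive (M : Type) (E : set (set M)) : Prop :=
  forall a b c d : M, a <> b -> c <> d ->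
    exists g : M -> M, is_aut E g /\ g a = c /\ g b = d.

From mathcomp Require Import all_boot.
From mathcomp Require Import boolp classical_sets functions.
Set Implicit Arguments. Unset Strict Implicit. Unset Printing Implicit Defensive.
Local Open Scope classical_set_scope.

(* Suppose some pair (x0, y0) cannot be swapped by an automorphism.  Then the
   orbit of (x0, y0) under Aut(M,E) is, by 2-homogeneity, an invariant
   tournament; by 3-homogeneity all its triangles look alike, and since a
   tournament on four points has a transitive triangle, it is a linear order <
   preserved by Aut(M,E).  List a 5-set in increasing order and record, for each
   position i, whether dropping the i-th point leaves an edge: this is a 5-bit
   profile.  As automorphisms preserve <, 5-homogeneity shows that two 5-sets
   whose profiles have the same number of ones have the same profile, so at most
   six profiles occur.  But edges and non-edges both exist (else the
   transposition of x0 and y0 would be an automorphism), and by 3-homogeneity an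
   increasing triple extends at any position to an edge and to a non-edge;
   merging two such extensions yields profiles with prescribed disagreements
   between any two positions, and a finite search shows that six profiles cannot
   produce all of them. *)

Section SeqSets.
Variable T : eqType.
Implicit Types (s t : seq T) (S : set T).

Lemma set_seqP s t : [set` s] = [set` t] <-> s =i t.
Proof.
split=> [eq_st x | eq_st]; last by rewrite predeqE => x; rewrite /= eq_st.
by apply/idP/idP; have := congr1 (fun A => A x) eq_st => /= ->.
Qed.

Lemma image_set_seq (U : eqType) (f : T -> U) s : f @` [set` s] = [set` map f s].
Proof.
rewrite predeqE => y; split; first by case=> x xs <-; apply: map_f.
by case/mapP=> x xs ->; exists x.
Qed.

Lemma nset_set_seq s : uniq s -> nset (size s) [set` s].
Proof.
move=> s_uniq; exists (tnth (in_tuple s)); split; first exact/tuple_uniqP.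
rewrite predeqE => x; split; last by case=> i _ <-; apply: mem_tnth.
by move=> xs; have /tnthP[i ->] : x \in in_tuple s by []; exists i.
Qed.

Lemma nset_seqP n S : nset n S -> exists s, [/\ uniq s, size s = n & S = [set` s]].
Proof.
case=> f [f_inj ->]; exists (map f (enum 'I_n)); split.
- by rewrite map_inj_uniq ?enum_uniq.
- by rewrite size_map size_enum_ord.
rewrite predeqE => x; split; first by case=> i _ <-; rewrite /= map_f ?mem_enum.
by case/mapP=> i _ ->; exists i.
Qed.

Lemma nset_set_seq_size n s : uniq s -> nset n [set` s] -> size s = n.
Proof.
move=> s_uniq /nset_seqP[t [t_uniq <- /set_seqP eq_st]].
by apply: perm_size; apply: uniq_perm.
Qed.

Lemma nset_subset_size n S s : nset n S -> S `<=` [set` s] -> n <= size s.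
Proof. by case/nset_seqP=> t [t_uniq <- ->] sub; apply: uniq_leq_size. Qed.

Lemma subset_set_seq S s : S `<=` [set` s] -> S = [set` [seq x <- s | `[< S x >]]].
Proof.
move=> sub; rewrite predeqE => x; rewrite /= mem_filter.
by split=> [Sx | /andP[/asboolP //]]; rewrite (asboolT Sx) sub.
Qed.

Lemma nset_image n S (f : T -> T) :
  {in S &, injective f} -> nset n S -> nset n (f @` S).
Proof.
move=> f_inj [g [g_inj eqS]]; subst S; exists (f \o g); split; last by rewrite image_comp.
by move=> i j /= /f_inj eq_g; apply: g_inj; apply: eq_g; rewrite inE; apply: imageT.
Qed.

Lemma nset_rem n S s : uniq s -> size s = n.+1 -> S `<=` [set` s] -> nset n S ->
  exists2 x, x \in s & S = [set` rem x s].
Proof.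
move=> s_uniq s_size sub nS; set t := [seq x <- s | `[< S x >]].
have eqS : S = [set` t] := subset_set_seq sub.
have t_uniq : uniq t by rewrite filter_uniq.
have t_size : size t = n by apply: nset_set_seq_size; rewrite -?eqS.
have [x xs xt] : exists2 x, x \in s & x \notin t.
  apply/allPn/negP => /allP s_t.
  by have := uniq_leq_size s_uniq s_t; rewrite s_size t_size ltnn.
have t_rem : {subset t <= rem x s}.
  move=> y yt; apply: rem_mem; last by move: yt; rewrite mem_filter => /andP[].
  by apply: contraNneq xt => <-.
have [_ eq_t] := uniq_min_size t_uniq t_rem ltac:(by rewrite size_rem // s_size t_size).
by exists x => //; rewrite eqS; apply/set_seqP.
Qed.

Lemma nset_preimage n S s (f : T -> T) : uniq s -> {in s &, injective f} ->
  S `<=` [set` s] -> nset n (f @` S) -> nset n S.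
Proof.
move=> s_uniq f_inj /subset_set_seq eqS; rewrite eqS image_set_seq.
have t_uniq : uniq [seq x <- s | `[< S x >]] by rewrite filter_uniq.
have map_uniq : uniq (map f [seq x <- s | `[< S x >]]).
  rewrite map_inj_in_uniq // => x y.
  by rewrite !mem_filter => /andP[_ xs] /andP[_ ys]; apply: f_inj.
by move/(nset_set_seq_size map_uniq); rewrite size_map => <-; apply: nset_set_seq.
Qed.

Lemma seq_bijection s t : uniq s -> uniq t -> size s = size t ->
  exists h : T -> T, map h s = t /\ {in s &, injective h}.
Proof.
case: s => [|d s'] s_uniq t_uniq eq_size; first by exists id; case: t {t_uniq} eq_size.
pose h x := nth d t (index x (d :: s')); exists h; split.
  apply: (@eq_from_nth _ d); rewrite size_map // => i lt_is.
  by rewrite (nth_map d) // /h index_uniq.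
move=> x y xs ys /eqP; rewrite /h nth_uniq -?eq_size ?index_mem // => /eqP eq_index.
by rewrite -(nth_index d xs) eq_index nth_index.
Qed.

Lemma map_rem_in (U : eqType) (f : T -> U) s x : {in s &, injective f} -> uniq s ->
  x \in s -> map f (rem x s) = rem (f x) (map f s).
Proof.
move=> f_inj s_uniq xs; rewrite !rem_filter ?map_inj_in_uniq // filter_map.
by congr map; apply: eq_in_filter => y ys /=; rewrite (inj_in_eq f_inj).
Qed.

Lemma rem_nth s i (d : T) : uniq s -> i < size s -> rem (nth d s i) s = take i s ++ drop i.+1 s.
Proof. by move=> s_uniq lt_is; rewrite remE index_uniq. Qed.

End SeqSets.

Definition insert_at (T : Type) i (x : T) s := take i s ++ x :: drop i s.

Definition insert2 (T : Type) i (x : T) j (y : T) s := insert_at j.+1 y (insert_at i x s).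

Lemma size_insert_at (T : Type) i (x : T) s : size (insert_at i x s) = (size s).+1.
Proof. by rewrite size_cat /= addnS -size_cat cat_take_drop. Qed.

Section TwoInsertions.
Variables (T : eqType) (e : rel T).
Hypotheses (e_irr : irreflexive e) (e_trans : transitive e).

Lemma sorted_insert2 (p q r u v : T) i j : i <= j < 4 ->
  sorted e (insert_at i u [:: p; q; r]) -> sorted e (insert_at j v [:: p; q; r]) ->
  (i < j) || e u v ->
  let L := insert2 i u j v [:: p; q; r] in
  [/\ sorted e L, size L = 5, rem (nth p L i) L = insert_at j v [:: p; q; r]
    & rem (nth p L j.+1) L = insert_at i u [:: p; q; r]].
Proof.
move=> /andP[le_ij lt_j4] s_u s_v uv /=.
have L_size : size (insert2 i u j v [:: p; q; r]) = 5 by rewrite !size_insert_at.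
have L_sorted : sorted e (insert2 i u j v [:: p; q; r]).
  move: s_u s_v uv; rewrite /insert2.
  case: i j le_ij lt_j4 {L_size} => [|[|[|[|i]]]] [|[|[|[|j]]]] //= _ _;
    rewrite ?andbT => s_u s_v uv;
    repeat match goal with H : is_true (_ && _) |- _ => case/andP: H => ? ? end;
    rewrite ?uv //; repeat (apply/andP; split) => //.
have L_uniq := sorted_uniq e_trans e_irr L_sorted.
have lt_i5 : i < 5 by rewrite ltnS (leq_trans le_ij) // ltnW.
rewrite !rem_nth ?L_size // /insert2; split=> //;
  by case: i j le_ij lt_j4 {uv s_u s_v L_sorted L_uniq L_size lt_i5} => [|[|[|[|i]]]] [|[|[|[|j]]]].
Qed.

End TwoInsertions.

Lemma perm_eq_bool (s t : seq bool) :
  size s = size t -> count id s = count id t -> perm_eq s t.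
Proof.
move=> eq_size eq_id; apply/allP => b _ /=; apply/eqP.
have count_true w : count_mem true w = count id w by apply/eq_count => -[].
have count_false w : count_mem false w = size w - count id w.
  by rewrite -(count_predC id w) addKn; apply/eq_count => -[].
by case: b; rewrite ?count_true ?count_false ?eq_size eq_id.
Qed.

Lemma uniq3 (T : eqType) (p q r : T) : uniq [:: p; q; r] = [&& p != q, p != r & q != r].
Proof. by rewrite /= !inE !negb_or andbT andbA. Qed.

Definition transp (T : eqType) (a b z : T) := if z == a then b else if z == b then a else z.

Lemma transpK (T : eqType) (a b : T) : involutive (transp a b).
Proof.
move=> z; rewrite /transp.
case: (eqVneq z a) => [->|za]; first by rewrite eqxx; case: (eqVneq b a) => [->|_]; rewrite ?eqxx.
case: (eqVneq z b) => [->|zb]; first by rewrite eqxx.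
by rewrite (negbTE za) (negbTE zb).
Qed.

Fixpoint bitseqs (n : nat) : seq (seq bool) :=
  if n is n'.+1 then map (cons true) (bitseqs n') ++ map (cons false) (bitseqs n')
  else [:: [::]].

Lemma mem_bitseqs n p : (p \in bitseqs n) = (size p == n).
Proof.
elim: n p => [|n IHn] [|b p] //=; rewrite mem_cat.
  by apply/negP => /orP[] /mapP[].
have cons_inj (c : bool) : injective (cons c) by move=> ? ? [].
by case: b; rewrite (mem_map (cons_inj _)) IHn eqSS; [apply/orb_idr | apply/orb_idl];
  case/mapP.
Qed.

Definition of_weight k := [seq p <- bitseqs 5 | count id p == k].

(* Bit i of a word is the profile bit of the i-th point; [separating F] lists the
   disagreements that [profile_insert2] produces: both ways between non-adjacent
   positions, some way between adjacent ones. *)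
Definition separating (F : seq (seq bool)) : bool :=
  all (fun a => all (fun b => (a.+2 <= b) ==>
         all (fun s => has (fun p => (nth false p a == s) && (nth false p b == ~~ s)) F)
             [:: true; false]) (iota 0 5)) (iota 0 5)
  && all (fun a => has (fun p => nth false p a != nth false p a.+1) F) (iota 0 4).

Definition weight_choices : seq (seq (option (seq bool))) :=
  foldr (fun k os => [seq o :: l | o <- None :: map Some (of_weight k), l <- os])
    [:: [::]] (iota 0 6).

Lemma no_separating_choice : all (fun os => ~~ separating (pmap id os)) weight_choices.
Proof. by vm_compute. Qed.

Lemma weight_choice_of (P : seq bool -> Prop) :
  (forall p, P p -> size p = 5) ->
  (forall p q, P p -> P q -> count id p = count id q -> p = q) ->
  exists2 os, os \in weight_choices & forall p, P p -> p \in pmap id os.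
Proof.
move=> Psize Puniq; pose F k := ohead [seq p <- of_weight k | `[< P p >]].
have F_choice k : F k \in None :: map Some (of_weight k).
  rewrite /F; case: filter (mem_filter (fun p => `[< P p >]) ^~ (of_weight k)) => //= p l memF.
  by rewrite inE map_f //; move: (memF p); rewrite inE eqxx => /esym/andP[].
have F_real p : P p -> F (count id p) = Some p.
  move=> Pp; have : p \in [seq q <- of_weight (count id p) | `[< P q >]].
    by rewrite !mem_filter mem_bitseqs (Psize p Pp) !eqxx !andbT; apply/asboolP.
  rewrite /F; case: filter (mem_filter (fun q => `[< P q >]) ^~ (of_weight (count id p)))
    => //= q l memF _; move: (memF q); rewrite inE eqxx mem_filter.
  by case/esym/and3P => /asboolP Pq /eqP wq _; rewrite (Puniq _ _ Pq Pp wq).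
exists (map F (iota 0 6)).
  rewrite /weight_choices.
  by elim: (iota 0 6) => // k ks IH; exact: (allpairs_f (fun o l => o :: l) (F_choice k) IH).
move=> p Pp; rewrite mem_pmap map_id -(F_real p Pp) map_f // mem_iota /=.
by rewrite ltnS -(Psize p Pp) count_size.
Qed.

Lemma no_separating_family (P : seq bool -> Prop) :
  (forall p, P p -> size p = 5) ->
  (forall p q, P p -> P q -> count id p = count id q -> p = q) ->
  (forall a b (s : bool), a.+2 <= b < 5 ->
     exists2 p, P p & (nth false p a == s) && (nth false p b == ~~ s)) ->
  (forall a, a < 4 -> exists2 p, P p & nth false p a != nth false p a.+1) ->
  False.
Proof.
move=> Psize Puniq Hsep Hadj; have [os os_choice P_os] := weight_choice_of Psize Puniq.
have /negP[] := allP no_separating_choice _ os_choice.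
apply/andP; split; apply/allP => a; rewrite mem_iota add0n => ha.
  apply/allP => b; rewrite mem_iota add0n => hb; apply/implyP => hab; apply/allP => s _.
  have [p Pp sep] := Hsep a b s (introT andP (conj hab hb)).
  by apply/hasP; exists p; first exact: P_os.
have [p Pp adj] := Hadj a ha.
by apply/hasP; exists p; first exact: P_os.
Qed.

Section Automorphisms.
Variables (T : eqType) (E : set (set T)).

Lemma aut_inj g : is_aut E g -> injective g.
Proof. by case=> /bij_inj. Qed.

Lemma aut_comp g k : is_aut E g -> is_aut E k -> is_aut E (k \o g).
Proof.
move=> [g_bij g_E] [k_bij k_E]; split; first exact: bij_comp.
by move=> S; rewrite -image_comp -k_E.
Qed.

Lemma aut_inv g : is_aut E g -> exists2 g', is_aut E g' & cancel g g'.
Proof.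
move=> [[g' gK g'K] g_E]; exists g' => //; split; first by exists g.
move=> S; rewrite (g_E (g' @` S)) image_comp (_ : g \o g' = id) ?image_id //.
by apply: funext => x /=; rewrite g'K.
Qed.

End Automorphisms.

Section Homogeneous.
Variables (T : eqType) (E : set (set T)).
Hypotheses (E4 : hypergraph4 E) (E_hom : le_set_homogeneous E 5).

Lemma bij_aut_of_trivial g : bijective g ->
  (forall S, nset 4 S -> E S) \/ (forall S, ~ E S) -> is_aut E g.
Proof.
move=> g_bij [E_full | E_empty]; split=> // S; last by split=> /E_empty.
have [g' gK g'K] := g_bij.
have g_inj x y : x \in S -> y \in S -> g x = g y -> x = y by move=> _ _; apply: bij_inj.
have g'_inj x y : x \in g @` S -> y \in g @` S -> g' x = g' y -> x = y.
  by move=> _ _; exact: (can_inj g'K).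
have g'gS : g' @` (g @` S) = S.
  by rewrite image_comp (_ : g' \o g = id) ?image_id //; apply: funext => x /=; rewrite gK.
split=> /E4 nS; apply: E_full; first exact: nset_image.
by rewrite -g'gS; apply: nset_image.
Qed.

Lemma induced_iso_small s t : uniq s -> uniq t -> size s = size t -> size s <= 3 ->
  induced_iso E [set` s] [set` t].
Proof.
move=> s_uniq t_uniq eq_size le_s3.
have [h [hs h_inj]] := seq_bijection s_uniq t_uniq eq_size.
exists h; split=> //; split; first by rewrite image_set_seq hs.
move=> S sub; split=> /E4 nS; exfalso.
  by have := nset_subset_size nS sub; rewrite leqNgt ltnS le_s3.
have gS_sub : h @` S `<=` [set` t] by rewrite -hs -image_set_seq; apply: image_subset.
by have := nset_subset_size nS gS_sub; rewrite -eq_size leqNgt ltnS le_s3.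
Qed.

Lemma homogeneous_seq s t : uniq s -> uniq t -> size s = size t -> size s <= 5 ->
  induced_iso E [set` s] [set` t] -> exists2 g, is_aut E g & map g s =i t.
Proof.
move=> s_uniq t_uniq eq_size le_s5 iso.
have nt : nset (size s) [set` t] by rewrite eq_size; apply: nset_set_seq.
have [g [g_aut gst]] := E_hom le_s5 (nset_set_seq s_uniq) nt iso.
by exists g => //; apply/set_seqP; rewrite -image_set_seq.
Qed.

Lemma aut_pair u v u' v' : u != v -> u' != v' -> exists2 g, is_aut E g &
  (g u = u' /\ g v = v') \/ (g u = v' /\ g v = u').
Proof.
move=> uv u'v'.
have uniq2 (a b : T) : a != b -> uniq [:: a; b] by rewrite /= inE andbT.
have [g g_aut g_uv] := homogeneous_seq (uniq2 _ _ uv) (uniq2 _ _ u'v') erefl erefl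
  (induced_iso_small (uniq2 _ _ uv) (uniq2 _ _ u'v') erefl erefl).
have gu_gv : g u != g v by apply: contra uv => /eqP /(aut_inj g_aut) ->.
exists g => //; move: (g_uv (g u)) (g_uv (g v)) gu_gv; rewrite !inE !eqxx ?orbT.
by move=> /esym/orP[]/eqP-> /esym/orP[]/eqP->; rewrite ?eqxx //; [left | right].
Qed.

Definition profile (L : seq T) : seq bool := [seq `[< E [set` rem x L] >] | x <- L].

Lemma nth_profile (d : T) L i : i < size L ->
  nth false (profile L) i = `[< E [set` rem (nth d L i) L] >].
Proof. exact: nth_map. Qed.

Lemma profile_aut g L : is_aut E g -> uniq L -> profile (map g L) = profile L.
Proof.
move=> g_aut L_uniq; rewrite /profile -map_comp; apply/eq_in_map => x xL /=.
rewrite -(map_rem_in (in2W (aut_inj g_aut)) L_uniq xL) -image_set_seq.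
by apply: asbool_equiv_eq; rewrite -(proj2 g_aut).
Qed.

Lemma induced_iso_of_profile L h : uniq L -> size L = 5 -> {in L &, injective h} ->
  (forall x, x \in L -> E [set` rem x L] <-> E [set` rem (h x) (map h L)]) ->
  induced_iso E [set` L] [set` map h L].
Proof.
move=> L_uniq L_size h_inj h_E; exists h; split=> //; split; first by rewrite image_set_seq.
move=> S sub; have [nS | nS] := pselect (nset 4 S).
  have [x xL ->] := nset_rem L_uniq L_size sub nS.
  by rewrite image_set_seq map_rem_in //; apply: h_E.
by split=> [/E4 /nS [] | /E4 /(nset_preimage L_uniq h_inj sub) /nS []].
Qed.

Lemma induced_iso_profile_perm L L' Is (d : T) : uniq L -> uniq L' -> size L = 5 ->
  size L' = 5 -> perm_eq Is (iota 0 5) -> profile L = map (nth false (profile L')) Is ->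
  induced_iso E [set` L] [set` L'].
Proof.
move=> L_uniq L'_uniq L_size L'_size Is_perm eq_profile.
have Is_size : size Is = 5 by rewrite (perm_size Is_perm) size_iota.
have t_perm : perm_eq (map (nth d L') Is) L'.
  by rewrite -[X in perm_eq _ X](mkseq_nth d) L'_size perm_map.
have t_uniq : uniq (map (nth d L') Is) by rewrite (perm_uniq t_perm).
have [h [hL h_inj]] := seq_bijection L_uniq t_uniq ltac:(by rewrite size_map Is_size).
have -> : [set` L'] = [set` map h L] by apply/set_seqP => y; rewrite hL (perm_mem t_perm).
(* h sends the i-th point of L to the (Is i)-th point of L'. *)
apply: induced_iso_of_profile => // x xL.
have [i lt_i5 ->] : exists2 i, i < 5 & x = nth d L i.
  by exists (index x L); rewrite ?nth_index // -L_size index_mem.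
have lt_Is5 : nth 0 Is i < 5.
  have : nth 0 Is i \in Is by rewrite mem_nth ?Is_size.
  by rewrite (perm_mem Is_perm) mem_iota.
apply: asbool_eq_equiv; have := congr1 (nth false ^~ i) eq_profile.
rewrite (nth_profile d) ?L_size // (nth_map 0) ?Is_size // (nth_profile d) ?L'_size // => ->.
congr (`[< E _ >]); rewrite -(nth_map d d h) ?L_size // hL (nth_map 0) ?Is_size //.
by apply/set_seqP => y; rewrite !mem_rem_uniq ?t_uniq // !inE (perm_mem t_perm).
Qed.

Section Orbital.
Variables (x0 y0 : T).
Hypothesis x0y0 : x0 != y0.

Definition arc u v := exists2 g, is_aut E g & g x0 = u /\ g y0 = v.

Lemma arc_neq u v : arc u v -> u != v.
Proof. by case=> g g_aut [<- <-]; apply: contra x0y0 => /eqP /(aut_inj g_aut) ->. Qed.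

Lemma arc_total u v : u != v -> arc u v \/ arc v u.
Proof.
by move=> uv; have [g g_aut [g_uv | g_vu]] := aut_pair x0y0 uv; [left | right]; exists g.
Qed.

Lemma arc_aut k u v : is_aut E k -> arc u v -> arc (k u) (k v).
Proof. by move=> k_aut [g g_aut [<- <-]]; exists (k \o g); first exact: aut_comp. Qed.

Lemma arc_autE k u v : is_aut E k -> arc (k u) (k v) <-> arc u v.
Proof.
move=> k_aut; split; last exact: arc_aut.
by have [k' k'_aut kK] := aut_inv k_aut; move/(arc_aut k'_aut); rewrite !kK.
Qed.

Hypothesis no_swap : ~ exists2 g, is_aut E g & g x0 = y0 /\ g y0 = x0.

Lemma arc_asym u v : arc u v -> ~ arc v u.
Proof.
case=> g g_aut [gx gy] [h h_aut [hx hy]]; have [g' g'_aut gK] := aut_inv g_aut.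
by apply: no_swap; exists (g' \o h); [exact: aut_comp | rewrite /= hx hy -gx -gy !gK].
Qed.

Lemma edge_and_nonedge (b : bool) : exists S, nset 4 S /\ (E S <-> b).
Proof.
apply: contrapT => no_S; apply: no_swap; exists (transp x0 y0); last first.
  by rewrite /transp eqxx eq_sym (negbTE x0y0) eqxx.
apply: bij_aut_of_trivial; first exact: inv_bij (transpK x0 y0).
case: b no_S => no_S; [right | left] => S.
  by move=> ES; apply: no_S; exists S; split=> //; apply: E4.
by move=> nS; apply: contrapT => nES; apply: no_S; exists S.
Qed.

Lemma cyclic_triangle_out u v w z : arc u v -> arc v w -> arc w u ->
  z \in [:: u; v; w] -> arc u z -> z = v.
Proof.
move=> uv vw wu; rewrite !inE => /or3P[]/eqP-> // uz.
  by have := arc_neq uz; rewrite eqxx.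
by case: (arc_asym wu uz).
Qed.

(* By 3-homogeneity every triangle is isomorphic to the cyclic triangle u v w. *)
Lemma no_source u v w p q r : arc u v -> arc v w -> arc w u -> uniq [:: p; q; r] ->
  arc p q -> arc p r -> False.
Proof.
move=> uv vw wu pqr_uniq.
have uvw_uniq : uniq [:: u; v; w].
  by rewrite uniq3 (arc_neq uv) (arc_neq vw) eq_sym (arc_neq wu).
have [g g_aut g_uvw] := homogeneous_seq uvw_uniq pqr_uniq erefl erefl
  (induced_iso_small uvw_uniq pqr_uniq erefl erefl).
have pre z : z \in [:: p; q; r] -> exists2 a, a \in [:: u; v; w] & z = g a.
  by rewrite -g_uvw => /mapP.
have [a au p_eq] := pre p (mem_head _ _).
have [b bu q_eq] := pre q ltac:(by rewrite !inE eqxx orbT).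
have [c cu r_eq] := pre r ltac:(by rewrite !inE eqxx !orbT).
subst p q r.
rewrite !(arc_autE _ _ g_aut) => ab ac; move: pqr_uniq; rewrite uniq3 => /and3P[_ _ /negP].
apply; apply/eqP; suff -> : b = c by [].
move: au; rewrite !inE => /or3P[]/eqP a_eq; subst a.
- by rewrite (cyclic_triangle_out uv vw wu bu ab) (cyclic_triangle_out uv vw wu cu ac).
- rewrite -(mem_rot 1) in bu; rewrite -(mem_rot 1) in cu.
  by rewrite (cyclic_triangle_out vw wu uv bu ab) (cyclic_triangle_out vw wu uv cu ac).
- rewrite -(mem_rot 2) in bu; rewrite -(mem_rot 2) in cu.
  by rewrite (cyclic_triangle_out wu uv vw bu ab) (cyclic_triangle_out wu uv vw cu ac).
Qed.

Variables p1 p2 p3 p4 : T.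
Hypothesis p_uniq : uniq [:: p1; p2; p3; p4].

(* Two of the arcs between p1 and p2, p3, p4 point the same way, which gives a
   triangle with a source or a sink. *)
Lemma arc_trans u v w : arc u v -> arc v w -> arc u w.
Proof.
move=> uv vw; have uw : u != w by apply/eqP => u_w; subst w; apply: arc_asym uv vw.
case: (arc_total uw) => // wu; exfalso.
have source p q r : uniq [:: p; q; r] -> arc p q -> arc p r -> False := no_source uv vw wu.
have sink p q r : uniq [:: p; q; r] -> arc q p -> arc r p -> False.
  rewrite uniq3 => /and3P[pq pr qr] qp rp; case: (arc_total qr) => [qr' | rq'].
    by apply: (source q p r) => //; rewrite uniq3 eq_sym pq qr.
  by apply: (source r p q) => //; rewrite uniq3 eq_sym pr eq_sym qr.
move: p_uniq; rewrite /= !inE !negb_or andbT.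
case/and3P=> /and3P[n12 n13 n14] /andP[n23 n24] n34.
have u3 (p q r : T) : p != q -> p != r -> q != r -> uniq [:: p; q; r] by rewrite uniq3 => -> -> ->.
case: (arc_total n12) (arc_total n13) (arc_total n14) => [a2|a2] [a3|a3] [a4|a4];
  solve [ exact: source (u3 _ _ _ n12 n13 n23) a2 a3 | exact: sink (u3 _ _ _ n12 n13 n23) a2 a3
        | exact: source (u3 _ _ _ n12 n14 n24) a2 a4 | exact: sink (u3 _ _ _ n12 n14 n24) a2 a4
        | exact: source (u3 _ _ _ n13 n14 n34) a3 a4 | exact: sink (u3 _ _ _ n13 n14 n34) a3 a4 ].
Qed.

Definition arc_lt : rel T := fun u v => `[< arc u v >].

Lemma arc_lt_irr : irreflexive arc_lt.
Proof. by move=> u; apply/asboolP => /arc_neq; rewrite eqxx. Qed.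

Lemma arc_lt_trans : transitive arc_lt.
Proof. by move=> v u w /asboolP uv /asboolP vw; apply/asboolP; apply: arc_trans uv vw. Qed.

Lemma arc_lt_total u v : u != v -> arc_lt u v || arc_lt v u.
Proof. by case/arc_total=> [uv | vu]; apply/orP; [left | right]; apply/asboolP. Qed.

Lemma arc_lt_aut g : is_aut E g -> {homo g : u v / arc_lt u v}.
Proof. by move=> g_aut u v /asboolP uv; apply/asboolP; apply: arc_aut. Qed.

Lemma sorted_perm s : uniq s -> exists2 t, sorted arc_lt t & perm_eq t s.
Proof.
move=> s_uniq; pose le u v := (u == v) || arc_lt u v.
have le_total : total le.
  by move=> u v; rewrite /le; case: (eqVneq u v) => //= /arc_lt_total.
have le_trans : transitive le.
  move=> v u w; rewrite /le => /orP[/eqP-> // | uv] /orP[/eqP<- | vw].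
    by rewrite uv orbT.
  by rewrite (arc_lt_trans uv vw) orbT.
exists (sort le s); last by rewrite perm_sort.
have : pairwise le (sort le s) && pairwise [rel x y | x != y] (sort le s).
  by rewrite -sorted_pairwise // sort_sorted // -uniq_pairwise sort_uniq.
rewrite -pairwise_relI sorted_pairwise; last exact: arc_lt_trans.
by apply: sub_pairwise => x y /andP[]; rewrite /le /= => /orP[/eqP-> | //]; rewrite eqxx.
Qed.

Lemma sorted_homogeneous s t : sorted arc_lt s -> sorted arc_lt t ->
  size s = size t -> size s <= 5 -> induced_iso E [set` s] [set` t] ->
  exists2 g, is_aut E g & map g s = t.
Proof.
move=> s_sorted t_sorted eq_size le_s5 iso.
have uniq_sorted := sorted_uniq arc_lt_trans arc_lt_irr.
have [g g_aut gst] := homogeneous_seq (uniq_sorted _ s_sorted) (uniq_sorted _ t_sorted)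
  eq_size le_s5 iso.
exists g => //; apply: (irr_sorted_eq arc_lt_trans arc_lt_irr) => //.
exact: homo_sorted (arc_lt_aut g_aut) _ s_sorted.
Qed.

Lemma extend_triple p q r j (b : bool) : sorted arc_lt [:: p; q; r] -> j < 4 ->
  exists u, sorted arc_lt (insert_at j u [:: p; q; r]) /\
            (E [set` insert_at j u [:: p; q; r]] <-> b).
Proof.
move=> pqr_sorted lt_j4.
have [S [nS ES]] := edge_and_nonedge b.
have [s [s_uniq s_size eqS]] := nset_seqP nS.
have [w w_sorted w_s] := sorted_perm s_uniq.
have w_size : size w = 4 by rewrite (perm_size w_s).
have w_uniq : uniq w := sorted_uniq arc_lt_trans arc_lt_irr w_sorted.
have lt_jw : j < size w by rewrite w_size.
set t := rem (nth x0 w j) w.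
have t_sorted : sorted arc_lt t := subseq_sorted arc_lt_trans (rem_subseq _ _) w_sorted.
have t_size : size t = 3 by rewrite size_rem ?mem_nth // w_size.
have t_uniq : uniq t := rem_uniq _ w_uniq.
have pqr_uniq : uniq [:: p; q; r] := sorted_uniq arc_lt_trans arc_lt_irr pqr_sorted.
have [g g_aut gt] := sorted_homogeneous t_sorted pqr_sorted t_size
  ltac:(by rewrite t_size) (induced_iso_small t_uniq pqr_uniq t_size ltac:(by rewrite t_size)).
exists (g (nth x0 w j)).
have gw : map g w = insert_at j (g (nth x0 w j)) [:: p; q; r].
  have j_take : size (map g (take j w)) = j by rewrite size_map size_take lt_jw.
  rewrite -gt /t rem_nth // /insert_at map_cat take_size_cat // drop_size_cat //.
  by rewrite -map_cons -map_cat -drop_nth ?cat_take_drop.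
split; first by rewrite -gw; exact: homo_sorted (arc_lt_aut g_aut) _ w_sorted.
rewrite -gw -image_set_seq -(proj2 g_aut); suff -> : [set` w] = S by [].
by rewrite eqS; apply/set_seqP; apply: perm_mem.
Qed.

Lemma profile_rigid L L' : sorted arc_lt L -> sorted arc_lt L' -> size L = 5 -> size L' = 5 ->
  count id (profile L) = count id (profile L') -> profile L = profile L'.
Proof.
move=> L_sorted L'_sorted L_size L'_size eq_weight.
have uniq_sorted := sorted_uniq arc_lt_trans arc_lt_irr.
have /(perm_iotaP false)[Is Is_perm eq_profile] : perm_eq (profile L) (profile L').
  by apply: perm_eq_bool; rewrite // !size_map L_size L'_size.
rewrite size_map L'_size in Is_perm.
have iso := induced_iso_profile_perm x0 (uniq_sorted _ L_sorted) (uniq_sorted _ L'_sorted)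
  L_size L'_size Is_perm eq_profile.
have [g g_aut <-] := sorted_homogeneous L_sorted L'_sorted
  ltac:(by rewrite L_size L'_size) ltac:(by rewrite L_size) iso.
by rewrite profile_aut // uniq_sorted.
Qed.

Lemma profile_insert2 p q r u v i j (bu bv : bool) : i <= j < 4 -> (i < j) || arc_lt u v ->
  sorted arc_lt (insert_at i u [:: p; q; r]) -> sorted arc_lt (insert_at j v [:: p; q; r]) ->
  (E [set` insert_at i u [:: p; q; r]] <-> bu) -> (E [set` insert_at j v [:: p; q; r]] <-> bv) ->
  exists L, [/\ sorted arc_lt L, size L = 5,
                nth false (profile L) i = bv & nth false (profile L) j.+1 = bu].
Proof.
move=> ij_lt uv u_sorted v_sorted Eu Ev.
have [L_sorted L_size rem_i rem_j] := sorted_insert2 arc_lt_irr arc_lt_trans ij_lt u_sorted v_sorted uv.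
have [le_ij lt_j4] := andP ij_lt.
exists (insert2 i u j v [:: p; q; r]); split=> //.
  rewrite (nth_profile p) ?L_size ?rem_i; last by apply: leq_ltn_trans le_ij _; apply: ltnW.
  exact: asbool_equiv_eqP idP Ev.
by rewrite (nth_profile p) ?L_size // rem_j; apply: asbool_equiv_eqP idP Eu.
Qed.

Lemma absurd_no_swap : False.
Proof.
have [p [q [r pqr_sorted]]] : exists p q r, sorted arc_lt [:: p; q; r].
  have p3_uniq : uniq [:: p1; p2; p3] by apply: subseq_uniq p_uniq; rewrite /= !eqxx.
  have [w w_sorted /perm_size w_size] := sorted_perm p3_uniq.
  by case: w w_sorted w_size => [|p [|q [|r [|? ?]]]] // pqr_sorted _; exists p, q, r.
pose profiles P := exists2 L, sorted arc_lt L /\ size L = 5 & P = profile L.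
apply: (@no_separating_family profiles).
- by move=> _ [L [_ L_size] ->]; rewrite size_map.
- by move=> _ _ [L [L_sorted L_size] ->] [L' [L'_sorted L'_size] ->]; apply: profile_rigid.
- move=> a b s /andP[lt_ab lt_b5].
  have lt_ab1 : a < b.-1 by rewrite -ltnS (ltn_predK lt_ab).
  have lt_b4 : b.-1 < 4 by rewrite -ltnS (ltn_predK lt_ab).
  have [u [u_sorted Eu]] := extend_triple (~~ s) pqr_sorted (ltn_trans lt_ab1 lt_b4).
  have [v [v_sorted Ev]] := extend_triple s pqr_sorted lt_b4.
  have ab_le : a <= b.-1 < 4 by rewrite ltnW.
  have ab_uv : (a < b.-1) || arc_lt u v by rewrite lt_ab1.
  have [L [L_sorted L_size La Lb]] := profile_insert2 ab_le ab_uv u_sorted v_sorted Eu Ev.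
  exists (profile L); first by exists L.
  by rewrite La -(ltn_predK lt_ab) Lb !eqxx.
- move=> a lt_a4.
  have [u [u_sorted Eu]] := extend_triple true pqr_sorted lt_a4.
  have [v [v_sorted Ev]] := extend_triple false pqr_sorted lt_a4.
  have uv : u != v by apply/eqP => u_v; subst v; have := proj1 Ev (proj2 Eu isT).
  have aa_lt : a <= a < 4 by rewrite leqnn.
  case/orP: (arc_lt_total uv) => [lt_uv | lt_vu].
    have aa_uv : (a < a) || arc_lt u v by rewrite lt_uv orbT.
    have [L [L_sorted L_size La La1]] := profile_insert2 aa_lt aa_uv u_sorted v_sorted Eu Ev.
    by exists (profile L); [exists L | rewrite La La1].
  have aa_vu : (a < a) || arc_lt v u by rewrite lt_vu orbT.
  have [L [L_sorted L_size La La1]] := profile_insert2 aa_lt aa_vu v_sorted u_sorted Ev Eu.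
  by exists (profile L); [exists L | rewrite La La1].
Qed.

End Orbital.

Lemma aut_swap x y : x != y -> forall p1 p2 p3 p4 : T, uniq [:: p1; p2; p3; p4] ->
  exists2 g, is_aut E g & g x = y /\ g y = x.
Proof.
move=> xy p1 p2 p3 p4 p_uniq; apply: contrapT => no_swap.
exact: absurd_no_swap xy no_swap _ _ _ _ p_uniq.
Qed.

End Homogeneous.

Theorem theoremB (M : Type) (E : set (set M)) :
  countably_infinite M -> hypergraph4 E -> le_set_homogeneous E 5 ->
  aut_two_transitive E.
Proof.
move=> [f f_bij] E4 E_hom a b c d ab cd.
pose T := {classic M}; pose E' : set (set T) := E.
have ab' : a != b :> T by apply/eqP.
have cd' : c != d :> T by apply/eqP.
have E4' : hypergraph4 E' := E4; have E_hom' : le_set_homogeneous E' 5 := E_hom.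
have f_inj : injective (f : nat -> T) := bij_inj f_bij.
have f_uniq : uniq [:: f 0 : T; f 1; f 2; f 3] by rewrite (map_inj_uniq f_inj (iota 0 4)).
have [g g_aut [[ga gb] | [ga gb]]] := aut_pair E4' E_hom' ab' cd'.
  by exists g.
have [h h_aut [hc hd]] := aut_swap E4' E_hom' cd' f_uniq.
by exists (h \o g); split; [exact: (@aut_comp T E') | rewrite /= ga gb hc hd].
Qed.
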